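(* Let $\mathcal{K}=(\mathcal{R},\mathcal{T})$ be an $\mathcal{ALCP}$ knowledge base over a propositional language $\mathcal{L}$, where $\mathcal{R}$ is consistent. Then $\mathcal{K}$ is ME-consistent if and only if for every $v\in\mathrm{Int}(\mathcal{L})$ with $P^{ME}_{\mathcal{R}}(v)>0$, the classical TBox $\mathcal{T}_v$ is consistent.
   Context: $\mathcal{L}$ is a propositional language over a finite set $\mathrm{sig}(\mathcal{L})$ of propositional variables; $\mathrm{Int}(\mathcal{L})$ is the set of all truth assignments of these variables. A probability distribution over $\mathcal{L}$ is a map $P:\mathrm{Int}(\mathcal{L})\to[0,1]$ with $\sum_v P(v)=1$, extended to formulas by $P(\phi)=\sum_{v\models\phi}P(v)$. A probabilistic constraint is an expression $c_0+\sum_{i=1}^k c_i\,\mathsf{p}(\phi_i)\ge 0$ with $c_i\in\mathbb{R}$ and $\phi_i\in\mathcal{L}$; $P$ satisfies it iff $c_0+\sum_i c_iP(\phi_i)\ge 0$. For a set $\mathcal{R}$ of constraints, $\mathrm{Mod}(\mathcal{R})$ is the set of distributions satisfying all of them, and $\mathcal{R}$ is consistent iff $\mathrm{Mod}(\mathcal{R})\neq\emptyset$. For consistent $\mathcal{R}$, $P^{ME}_{\mathcal{R}}$ denotes the unique element of $\mathrm{Mod}(\mathcal{R})$ maximizing the entropy $H(P)=-\sum_{v}P(v)\log P(v)$. Concepts are built from disjoint sets $N_C$ (concept names) and $N_R$ (role names) by $C::=A\mid\neg C\mid C\sqcap C\mid \exists r.C$ ($A\in N_C$, $r\in N_R$).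 An $\mathcal{L}$-GCI is $\langle C\sqsubseteq D:\kappa\rangle$ with concepts $C,D$ and $\kappa\in\mathcal{L}$; an $\mathcal{L}$-TBox is a finite set of $\mathcal{L}$-GCIs; a knowledge base (KB) is a pair $\mathcal{K}=(\mathcal{R},\mathcal{T})$ of a set $\mathcal{R}$ of probabilistic constraints over $\mathcal{L}$ and an $\mathcal{L}$-TBox $\mathcal{T}$. A possible world is $\mathcal{I}=(\Delta^{\mathcal{I}},\cdot^{\mathcal{I}},v^{\mathcal{I}})$ with nonempty domain $\Delta^{\mathcal{I}}$, $A^{\mathcal{I}}\subseteq\Delta^{\mathcal{I}}$, $r^{\mathcal{I}}\subseteq\Delta^{\mathcal{I}}\times\Delta^{\mathcal{I}}$, extended by $(\neg C)^{\mathcal{I}}=\Delta^{\mathcal{I}}\setminus C^{\mathcal{I}}$, $(C\sqcap D)^{\mathcal{I}}=C^{\mathcal{I}}\cap D^{\mathcal{I}}$, $(\exists r.C)^{\mathcal{I}}=\{d\mid\exists e\,((d,e)\in r^{\mathcal{I}}, e\in C^{\mathcal{I}})\}$, and $v^{\mathcal{I}}\in\mathrm{Int}(\mathcal{L})$. $\mathcal{I}$ is a model of $\langle C\sqsubseteq D:\kappa\rangle$ iff $v^{\mathcal{I}}\not\models\kappa$ or $C^{\mathcal{I}}\subseteq D^{\mathcal{I}}$, and of $\mathcal{T}$ iff of all its GCIs. For $v\in\mathrm{Int}(\mathcal{L})$, $\mathcal{T}_v=\{C\sqsubseteq D\mid \langle C\sqsubseteq D:\kappa\rangle\in\mathcal{T},\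 v\models\kappa\}$ is a classical $\mathcal{ALC}$ TBox; it is consistent iff some classical interpretation $(\Delta,\cdot)$ satisfies $C^{\mathcal{I}}\subseteq D^{\mathcal{I}}$ for all its members. An $\mathcal{ALCP}$-interpretation is $\mathcal{P}=(\mathfrak{I},P_{\mathfrak{I}})$ with $\mathfrak{I}$ a nonempty finite set of possible worlds and $P_{\mathfrak{I}}$ a probability distribution on $\mathfrak{I}$; it induces $P^{\mathcal{P}}(v)=\sum_{\mathcal{I}\in\mathfrak{I},v^{\mathcal{I}}=v}P_{\mathfrak{I}}(\mathcal{I})$. $\mathcal{P}$ is a model of $\mathcal{K}$ iff every world of $\mathfrak{I}$ is a model of $\mathcal{T}$ and $P^{\mathcal{P}}\in\mathrm{Mod}(\mathcal{R})$; it is an ME-$\mathcal{ALCP}$-model if moreover $P^{\mathcal{P}}=P^{ME}_{\mathcal{R}}$. $\mathcal{K}$ is ME-consistent iff it has an ME-$\mathcal{ALCP}$-model. *)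

From Stdlib Require List.
From HB Require Import structures.
From mathcomp Require Import all_boot all_order all_algebra.
From mathcomp Require Import boolp classical_sets reals exp.
Set Implicit Arguments.
Unset Strict Implicit.
Unset Printing Implicit Defensive.
Import Order.TTheory GRing.Theory Num.Theory.
Local Open Scope ring_scope.

Section Prop_logic.
Variable S : finType.

Inductive formula : Type :=
| FTop : formula
| FBot : formula
| FVar : S -> formula
| FNot : formula -> formula
| FAnd : formula -> formula -> formula
| FOr  : formula -> formula -> formula
| FImp : formula -> formula -> formula.

Definition Int := {ffun S -> bool}.

Fixpoint sat (v : Int) (phi : formula) : bool :=
  match phi with
  | FTop => true
  | FBot => false
  | FVar x => v x
  | FNot p => ~~ sat v p
  | FAnd p q => sat v p && sat v q
  | FOr p q => sat v p || sat v q
  | FImp p q => sat v p ==> sat v q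
  end.
End Prop_logic.

Arguments FTop {S}. Arguments FBot {S}.

Section Prob.
Variable R : realType.
Variable S : finType.

Definition is_distribution (P : Int S -> R) : Prop :=
  (forall v, 0 <= P v) /\ \sum_(v : Int S) P v = 1.

Definition probF (P : Int S -> R) (phi : formula S) : R :=
  \sum_(v : Int S | sat v phi) P v.

Record constraint := Constraint {
  c0 : R;
  cterms : seq (R * formula S) }.

Definition sat_constraint (P : Int S -> R) (c : constraint) : Prop :=
  0 <= c0 c + \sum_(t <- cterms c) t.1 * probF P t.2.

Definition constraints := constraint -> Prop.

Definition Mod (Rs : constraints) (P : Int S -> R) : Prop :=
  is_distribution P /\ forall c, Rs c -> sat_constraint P c.

Definition consistent (Rs : constraints) : Prop := exists P, Mod Rs P.

(* entropy, with the convention 0 log 0 = 0 *)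
Definition entropy (P : Int S -> R) : R :=
  - \sum_(v : Int S) (if P v == 0 then 0 else P v * ln (P v)).

Definition is_ME (Rs : constraints) (P : Int S -> R) : Prop :=
  Mod Rs P /\ forall Q, Mod Rs Q -> entropy Q <= entropy P.

(* P^ME_R : the (unique, for consistent R) entropy maximizer of Mod(R);
   chosen by classical choice (an arbitrary value if there is none). *)
Definition PME (Rs : constraints) : Int S -> R :=
  match pselect (exists P, is_ME Rs P) with
  | left h => projT1 (cid h)
  | right _ => fun _ => 0
  end.
End Prob.

Section DL.
Variables (NC NR : Type).

Inductive concept : Type :=
| CAtom : NC -> concept
| CNot  : concept -> concept
| CAnd  : concept -> concept -> concept
| CEx   : NR -> concept -> concept.

Fixpoint cinterp (D : Type) (AI : NC -> D -> Prop) (rI : NR -> D -> D -> Prop)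
  (C : concept) : D -> Prop :=
  match C with
  | CAtom A => AI A
  | CNot C => fun d => ~ cinterp AI rI C d
  | CAnd C1 C2 => fun d => cinterp AI rI C1 d /\ cinterp AI rI C2 d
  | CEx r C => fun d => exists e, rI r d e /\ cinterp AI rI C e
  end.

Definition classical_TBox := seq (concept * concept).

Definition TBox_consistent (T : classical_TBox) : Prop :=
  exists (D : Type) (d0 : D) (AI : NC -> D -> Prop) (rI : NR -> D -> D -> Prop),
    forall g, List.In g T -> forall d, cinterp AI rI g.1 d -> cinterp AI rI g.2 d.

Variable S : finType.

Record GCI := MkGCI { gci_lhs : concept; gci_rhs : concept; gci_ctx : formula S }.
Definition LTBox := seq GCI.

Definition TBox_at (T : LTBox) (v : Int S) : classical_TBox :=
  [seq (gci_lhs g, gci_rhs g) | g <- T & sat v (gci_ctx g)].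

Record world := MkWorld {
  wdom : Type;
  wpt : wdom;                         (* Delta nonempty *)
  wA : NC -> wdom -> Prop;
  wr : NR -> wdom -> wdom -> Prop;
  wv : Int S }.

Arguments wA : clear implicits.
Arguments wr : clear implicits.

Definition world_models_GCI (I : world) (g : GCI) : Prop :=
  ~~ sat (wv I) (gci_ctx g) \/
  forall d, cinterp (wA I) (wr I) (gci_lhs g) d -> cinterp (wA I) (wr I) (gci_rhs g) d.

Definition world_models (I : world) (T : LTBox) : Prop :=
  forall g, List.In g T -> world_models_GCI I g.

Variable R : realType.

Record ALCP_interp := MkALCP {
  aW : finType;
  aworld : aW -> world;
  aP : aW -> R;
  aW_nonempty : (0 < #|aW|)%N;
  aP_ge0 : forall w, 0 <= aP w;
  aP_sum1 : \sum_(w : aW) aP w = 1 }.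

Definition induced (Pi : ALCP_interp) (v : Int S) : R :=
  \sum_(w : aW Pi | wv (aworld w) == v) aP w.

Definition KB := (constraints R S * LTBox)%type.

Definition is_model (K : KB) (Pi : ALCP_interp) : Prop :=
  (forall w : aW Pi, world_models (aworld w) K.2) /\ Mod K.1 (induced Pi).

Definition is_ME_model (K : KB) (Pi : ALCP_interp) : Prop :=
  is_model K Pi /\ forall v, induced Pi v = PME K.1 v.

Definition ME_consistent (K : KB) : Prop := exists Pi, is_ME_model K Pi.
End DL.

From Pilot Require Import Defs.
From mathcomp Require Import all_boot all_order all_algebra.
From mathcomp Require Import reals.
From mathcomp Require Import all_classical all_reals all_analysis.
From mathcomp Require Import lra.
Set Implicit Arguments.
Unset Strict Implicit.
Unset Printing Implicit Defensive.

Import Order.TTheory GRing.Theory Num.Theory.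
Import numFieldNormedType.Exports.
Local Open Scope classical_set_scope.
Local Open Scope ring_scope.

(* Since entropy is continuous (x ln x -> 0 at 0) and Mod(R) is a nonempty
   compact subset of [0,1]^Int(L), P^ME_R really is a maximizer in Mod(R).
   A possible world I models T exactly when its classical part models T_(v^I);
   hence in any model, a valuation of positive probability is carried by a
   world witnessing the consistency of T_v.  Conversely, given models of T_v for
   every v in the support of P^ME_R, take one world per valuation, weighted by
   P^ME_R; the induced distribution is then P^ME_R itself. *)

Section xlnx.
Variable R : realType.

Definition xlnx (x : R) : R := x * ln x.

Lemma xlnx_le_sqr (x : R) : xlnx x <= x ^+ 2.
Proof.
rewrite /xlnx; have [x_le0|x_gt0] := leP x 0; first by rewrite ln0 // mulr0 sqr_ge0.
by rewrite expr2 ler_pM2l // ltW // ln_sublinear.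
Qed.

Lemma xlnx_ge_sqrt (x : R) : - (2 * Num.sqrt x) <= xlnx x.
Proof.
rewrite /xlnx; have [x_le0|x_gt0] := leP x 0.
  by rewrite ln0 // mulr0 oppr_le0 mulr_ge0 // sqrtr_ge0.
set s := Num.sqrt x; have s_gt0 : 0 < s by rewrite sqrtr_gt0.
have -> : x = s ^+ 2 by rewrite sqr_sqrtr // ltW.
(* ln (1/s) < 1/s *)
have lns_gt : - s^-1 < ln s.
  by rewrite ltrNl -lnV ?posrE // ln_sublinear ?invr_gt0.
have key : - s <= s ^+ 2 * ln s.
  have -> : - s = s ^+ 2 * - s^-1 by rewrite mulrN expr2 -mulrA divff ?gt_eqF ?mulr1.
  by rewrite ler_pM2l ?exprn_gt0 // ltW.
rewrite lnXn // mulrnAr; lra.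
Qed.

Lemma continuous_xlnx : continuous xlnx.
Proof.
move=> x; have [x_lt0|x_gt0|->] := ltgtP x 0.
- apply: (near_cst_continuous 0); near=> y.
  by rewrite /xlnx ln0 ?mulr0 // ltW //; near: y; exact: lt_nbhsl.
- by apply: continuousM; [exact: cvg_id | exact: continuous_ln].
- rewrite /continuous_at [xlnx 0]mul0r.
  apply: (@squeeze_cvgr _ _ _ _ (fun y => - (2 * Num.sqrt y)) (fun y => y ^+ 2)).
  + by near=> y; rewrite xlnx_le_sqr xlnx_ge_sqrt.
  + have := cvgN (cvgM (cvg_cst (2 : R)) (@sqrt_continuous R 0)).
    by rewrite sqrtr0 mulr0 oppr0; apply.
  + have := cvgM (@cvg_id _ (nbhs (0 : R))) (@cvg_id _ (nbhs (0 : R))).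
    by rewrite mulr0; apply.
Unshelve. all: by end_near.
Qed.

End xlnx.

Section max_entropy.
Import ArrowAsProduct.
Variables (R : realType) (S : finType).
Implicit Types (P : Int S -> R) (Rs : constraints R S).

Lemma continuous_sum (T : topologicalType) (I : Type) (r : seq I) (p : pred I)
    (F : I -> T -> R) :
  (forall i, p i -> continuous (F i)) ->
  continuous (fun x => \sum_(i <- r | p i) F i x).
Proof. exact/continuous_big/add_continuous. Qed.

Lemma continuous_eval (v : Int S) : continuous (fun P : Int S -> R => P v).
Proof. exact: (@proj_continuous _ (fun=> R) v). Qed.

Lemma entropyE P : entropy P = - \sum_v xlnx (P v).
Proof.
congr (- _); apply: eq_bigr => v _.
by case: eqP => [->|//]; rewrite /xlnx mul0r.
Qed.

Lemma continuous_entropy : continuous (@entropy R S).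
Proof.
have -> : @entropy R S = fun Q => - \sum_v xlnx (Q v).
  by apply/funext => Q; rewrite entropyE.
move=> P; apply: continuousN; apply: continuous_sum => v _ Q.
by apply: continuous_comp; [exact: continuous_eval | exact: continuous_xlnx].
Qed.

Lemma continuous_probF (phi : formula S) :
  continuous (fun P : Int S -> R => probF P phi).
Proof. by apply: continuous_sum => v _; exact: continuous_eval. Qed.

Lemma continuous_constraint_value (c : constraint R S) :
  continuous (fun P => c0 c + \sum_(t <- cterms c) t.1 * probF P t.2).
Proof.
move=> P; apply: continuousD; first exact: cst_continuous.
apply: continuous_sum => t _ Q.
by apply: continuousM; [exact: cst_continuous | exact: continuous_probF].
Qed.

Lemma closed_ge0 (T : topologicalType) (f : T -> R) :
  continuous f -> closed (f @^-1` [set y | 0 <= y]).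
Proof.
move=> fc; apply: preimage_closed; last exact: closed_ge.
by move=> x _; exact: fc.
Qed.

Lemma closed_Mod Rs : closed [set P | Mod Rs P].
Proof.
have -> : [set P | Mod Rs P] =
    \bigcap_v ((fun P => P v) @^-1` [set y | 0 <= y])
    `&` (fun P => \sum_v P v) @^-1` [set y | y = 1]
    `&` \bigcap_(c in Rs)
          ((fun P => c0 c + \sum_(t <- cterms c) t.1 * probF P t.2) @^-1` [set y | 0 <= y]).
  apply/seteqP; split=> P /=.
    by move=> [[P_ge0 P_sum] PRs]; do ![split] => // v _; exact: P_ge0.
  by move=> [[P_ge0 P_sum] PRs]; do ![split] => // v; exact: P_ge0.
apply: closedI; first apply: closedI.
- by apply: closed_bigI => v _; apply: closed_ge0; exact: continuous_eval.
- apply: preimage_closed; last exact: closed_eq.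
  by move=> P _; apply: continuous_sum => v _; exact: continuous_eval.
- by apply: closed_bigI => c _; apply: closed_ge0; exact: continuous_constraint_value.
Qed.

Lemma distribution_le1 P v : is_distribution P -> P v <= 1.
Proof.
case=> P_ge0 <-; rewrite (bigD1 v) //= lerDl.
by apply: sumr_ge0 => w _; exact: P_ge0.
Qed.

Lemma compact_Mod Rs : compact [set P | Mod Rs P].
Proof.
have cpt := tychonoff (fun v : Int S => @segment_compact R 0 1).
apply: subclosed_compact cpt _; first exact: closed_Mod.
move=> P [[P_ge0 P_sum] _] v /=; rewrite in_itv /= P_ge0.
exact: distribution_le1.
Qed.

Lemma is_ME_exists Rs : consistent Rs -> exists P, is_ME Rs P.
Proof.
move=> [P0 P0_Mod].
have [P PMod Pmax] := compact_EVT_max (ex_intro _ P0 P0_Mod) (@compact_Mod Rs)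
  (continuous_subspaceT continuous_entropy).
by exists P; split=> [|Q QMod]; [rewrite inE in PMod | apply: Pmax; rewrite inE].
Qed.

Lemma PME_is_ME Rs : consistent Rs -> is_ME Rs (PME Rs).
Proof.
move=> /is_ME_exists ME; rewrite /PME.
by case: pselect => [h|//]; exact: projT2 (cid h).
Qed.

End max_entropy.

Section worlds.
Variables (NC NR : Type) (S : finType).
Implicit Types (T : LTBox NC NR S) (I : world NC NR S).

Definition satisfies_TBox (D : Type) (AI : NC -> D -> Prop)
    (rI : NR -> D -> D -> Prop) (T : classical_TBox NC NR) : Prop :=
  forall g, List.In g T -> forall d, cinterp AI rI g.1 d -> cinterp AI rI g.2 d.

Lemma satisfies_TBox_at (D : Type) (AI : NC -> D -> Prop)
    (rI : NR -> D -> D -> Prop) T v :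
  satisfies_TBox AI rI (TBox_at T v) <->
  forall g, List.In g T -> sat v (gci_ctx g) ->
    forall d, cinterp AI rI (gci_lhs g) d -> cinterp AI rI (gci_rhs g) d.
Proof.
elim: T => [|g0 T IH]; first by split=> _ ? [].
rewrite /TBox_at /=; case: ifPn => [ctx_g0 | Nctx_g0]; split.
- move=> sat_all g [<- _|Tg]; first exact: (sat_all (_, _) (or_introl erefl)).
  by apply: IH.1 g Tg => g' Tg'; apply: sat_all; right.
- move=> sat_all g [<-|Tg]; first exact: sat_all g0 (or_introl erefl) ctx_g0.
  by apply: IH.2 g Tg => g' Tg'; apply: sat_all; right.
- move=> /IH sat_all g [<-|Tg]; last exact: sat_all.
  by rewrite (negbTE Nctx_g0).
- by move=> sat_all; apply/IH => g Tg; apply: sat_all; right.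
Qed.

Lemma world_models_TBox_at I T :
  world_models I T <-> satisfies_TBox (@wA _ _ _ I) (@wr _ _ _ I) (TBox_at T (wv I)).
Proof.
rewrite satisfies_TBox_at; split=> [I_T g Tg ctx_g | I_T g Tg].
  by case: (I_T g Tg) => [/negP|//].
by case: (boolP (sat (wv I) (gci_ctx g))) => [/(I_T g Tg)|]; [right | left].
Qed.

Lemma TBox_at_consistent_world I T :
  world_models I T -> TBox_consistent (TBox_at T (wv I)).
Proof.
by move=> /world_models_TBox_at I_T; exists (wdom I), (wpt I), (@wA _ _ _ I), (@wr _ _ _ I).
Qed.

Lemma world_of_TBox_at_consistent T v :
  TBox_consistent (TBox_at T v) -> exists I, wv I = v /\ world_models I T.
Proof.
move=> [D [d0 [AI [rI sat_Tv]]]].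
by exists (MkWorld d0 AI rI v); split=> //; exact/world_models_TBox_at.
Qed.

End worlds.

Section realization.
Variables (NC NR : Type) (S : finType) (R : realType).
Implicit Types (T : LTBox NC NR S) (P : Int S -> R).

Lemma distribution_exists_pos P : is_distribution P -> exists v, 0 < P v.
Proof.
move=> [P_ge0 P_sum].
have [/existsP //|/existsPn no_pos] := boolP [exists v, 0 < P v].
suff : \sum_v P v = 0 by rewrite P_sum => /eqP; rewrite oner_eq0.
by apply: big1 => v _; apply/le_anti; rewrite P_ge0 andbT leNgt no_pos.
Qed.

Lemma model_TBox_at_consistent (Pi : ALCP_interp NC NR S R) T v :
  (forall w : aW Pi, world_models (aworld w) T) -> 0 < Defs.induced Pi v ->
  TBox_consistent (TBox_at T v).
Proof.
move=> Pi_T; rewrite /Defs.induced.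
case: (pickP [pred w : aW Pi | wv (aworld w) == v]) => [w /eqP <- _|no_w].
  exact: TBox_at_consistent_world.
by rewrite big_pred0 ?ltxx.
Qed.

Lemma realize_distribution P T :
  is_distribution P -> (forall v, 0 < P v -> TBox_consistent (TBox_at T v)) ->
  exists Pi : ALCP_interp NC NR S R,
    (forall w : aW Pi, world_models (aworld w) T) /\ Defs.induced Pi = P.
Proof.
move=> [P_ge0 P_sum] T_supp.
have [v0 Pv0] := distribution_exists_pos (conj P_ge0 P_sum).
(* valuations of probability zero are sent to a world of the support *)
pose u v := if 0 < P v then v else v0.
have /choice [I IP] : forall v, exists I, wv I = u v /\ world_models I T.
  by move=> v; apply/world_of_TBox_at_consistent/T_supp; rewrite /u; case: ifP.
have W_nonempty : (0 < #|Int S|)%N by apply/card_gt0P; exists v0.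
exists (MkALCP I W_nonempty P_ge0 P_sum); split=> [w|]; first exact: (IP w).2.
apply/funext=> v; rewrite /Defs.induced /=.
transitivity (\sum_(w | w == v) P w); last exact: big_pred1_eq.
rewrite big_mkcond [RHS]big_mkcond; apply: eq_bigr => w _; rewrite (IP w).1 /u.
have [//|Npos] := boolP (0 < P w).
have -> : P w = 0 by apply/le_anti; rewrite P_ge0 andbT leNgt.
by rewrite !if_same.
Qed.

End realization.

Theorem theorem1 (R : realType) (S : finType) (NC NR : Type)
  (K : KB NC NR S R) :
  consistent K.1 ->
  (ME_consistent K <->
   forall v : Int S, 0 < PME K.1 v -> TBox_consistent (TBox_at K.2 v)).
Proof.
move=> consistent_R; have [PME_Mod _] := PME_is_ME consistent_R.
split=> [[Pi [[Pi_T _] Pi_PME]] v | TBox_supp].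
  by rewrite -Pi_PME; exact: model_TBox_at_consistent.
have [Pi [Pi_T Pi_PME]] := realize_distribution PME_Mod.1 TBox_supp.
by exists Pi; split; [split=> //; rewrite Pi_PME | rewrite Pi_PME].
Qed.
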